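(* Let $\pi\in S_n$, $0\le u<v\le n$, and assume that $I=\{u+1,\dots,v\}$ is a $\pi$-section. Let $\sigma$ be the restriction of $\pi$ to $I$, regarded as the permutation $k\mapsto\pi(u+k)-u$ of $\{1,\dots,v-u\}$. Then $[c_u]_{\beta_\pi}$ and $[c_v]_{\beta_\pi}$ are narrows of $G/\beta_\pi$, and the subdiagram of the canonical diagram of $G/\beta_\pi$ determined by the interval $\bigl[[c_u]_{\beta_\pi},[c_v]_{\beta_\pi}\bigr]$ equals (up to boundary similarity) the canonical diagram of $G'/\beta_\sigma$, where $G'$ is the square grid of length $2(v-u)$.
   Context: For $m\ge1$, the square grid of length $2m$ is the direct product of chains $0=c_0\prec\dots\prec c_m$ and $0=d_0\prec\dots\prec d_m$, elements written $c_i\vee d_j$; $G$ denotes the one with $m=n$. For $\pi\in S_m$, $\beta_\pi$ is the join, in the lattice of join-congruences (equivalences compatible with $\vee$), of the smallest join-congruences collapsing $\{c_{i-1}\vee d_{\pi(i)},c_i\vee d_{\pi(i)-1},c_i\vee d_{\pi(i)}\}$, $i=1,\dots,m$; the quotient is a slim semimodular lattice of length $m$ and its canonical diagram is its planar diagram whose left boundary chain is $\{[c_i]_{\beta_\pi}\}$ and right boundary chain is $\{[d_i]_{\beta_\pi}\}$ (diagrams considered up to boundary similarity, i.e. up to isomorphisms preserving left and right boundary chains). A narrows of a lattice is an element comparable with every element. For $\sigma\in S_n$, a set $J$ is closed if $\sigma(J)\subseteq J$; a nonempty interval $\{a,\dots,b\}$ of $\{1<\dots<n\}$ is a $\sigma$-section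 if it, $\{1,\dots,a-1\}$ and $\{b+1,\dots,n\}$ are closed. *)

From mathcomp Require Import all_boot all_fingroup.
Set Implicit Arguments. Unset Strict Implicit. Unset Printing Implicit Defensive.

(* The square grid of length 2m: pairs (i,j) with 0 <= i,j <= m, the pair (i,j)
   standing for c_i \/ d_j.  Join is componentwise max. *)
Notation gridT m := ('I_m.+1 * 'I_m.+1)%type.

Definition gjoin (m : nat) (x y : gridT m) : gridT m :=
  (if x.1 <= y.1 then y.1 else x.1, if x.2 <= y.2 then y.2 else x.2).

Definition gc (m : nat) (i : 'I_m.+1) : gridT m := (i, ord0).
Definition gd (m : nat) (j : 'I_m.+1) : gridT m := (ord0, j).

Definition join_congruence (m : nat) (R : gridT m -> gridT m -> Prop) : Prop :=
  [/\ (forall x, R x x), (forall x y, R x y -> R y x),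
      (forall x y z, R x y -> R y z -> R x z)
    & (forall x y z, R x y -> R (gjoin x z) (gjoin y z))].

Definition collapses (m : nat) (R : gridT m -> gridT m -> Prop)
  (S : seq (gridT m)) : Prop :=
  forall x y, x \in S -> y \in S -> R x y.

Definition jcon_gen (m : nat) (S : seq (gridT m)) (x y : gridT m) : Prop :=
  forall R, join_congruence R -> collapses R S -> R x y.

(* Permutations of {1..m} are represented as p : 'S_m acting on 0-based
   ordinals: the 1-based pi(i) is (p (i-1)) + 1.  For the 1-based index
   i = k+1, the triple {c_{i-1} \/ d_{pi i}, c_i \/ d_{pi i - 1}, c_i \/ d_{pi i}}
   is the following. *)
Definition triple (m : nat) (p : 'S_m) (k : 'I_m) : seq (gridT m) :=
  [:: (inord k, inord (p k).+1); (inord k.+1, inord (p k)); (inord k.+1, inord (p k).+1)].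

(* beta_pi: the join (in the lattice of join-congruences) of the smallest
   join-congruences collapsing the triples, i.e. the least join-congruence
   containing all of them. *)
Definition beta (m : nat) (p : 'S_m) (x y : gridT m) : Prop :=
  forall R, join_congruence R ->
    (forall k x' y', jcon_gen (triple p k) x' y' -> R x' y') -> R x y.

(* order of the quotient G/beta: [x] <= [y] iff [x] \/ [y] = [y] *)
Definition cls_le (m : nat) (p : 'S_m) (x y : gridT m) : Prop :=
  beta p (gjoin x y) y.

Definition narrows (m : nat) (p : 'S_m) (a : gridT m) : Prop :=
  forall x, cls_le p x a \/ cls_le p a x.

Definition closedJ (n : nat) (p : 'S_n) (J : {set 'I_n}) : bool :=
  p @: J \subset J.

Definition segm (n a b : nat) : {set 'I_n} := [set k : 'I_n | a <= k.+1 <= b].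

Definition is_section (n : nat) (p : 'S_n) (a b : nat) : Prop :=
  [/\ 0 < a <= b, b <= n, closedJ p (segm n a b),
      closedJ p (segm n 1 a.-1) & closedJ p (segm n b.+1 n)].

(* 0-based action of p on nat (identity outside 'I_n) *)
Definition perm_nat (n : nat) (p : 'S_n) (i : nat) : nat :=
  match @insub nat (fun i => i < n) 'I_n i with Some k => val (p k) | None => i end.

Definition interval_iso (n m : nat) (p : 'S_n) (s : 'S_m) (a b : gridT n)
  (f : gridT m -> gridT n) : Prop :=
  [/\ (forall x y, cls_le s x y <-> cls_le p (f x) (f y)),
      (forall x, cls_le p a (f x) /\ cls_le p (f x) b)
    & (forall y, cls_le p a y -> cls_le p y b -> exists x, beta p (f x) y)].

Arguments gc m i : clear implicits.
Arguments gd m j : clear implicits.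

(* At a cut t of p (an initial segment {1..t} mapped into itself), the
   generating triples with index below t rewrite c_t into c_t \/ d_t one step
   of d at a time, and symmetrically d_t into c_t \/ d_t; so c_t, c_t \/ d_t and
   d_t are beta_p-equivalent, which makes [c_t] comparable with everything.
   Both ends of a section are cuts.  The translation (i, j) |-> (u + i, u + j)
   of the small grid into the square [c_u \/ d_u, c_v \/ d_v] preserves joins
   and sends the triples of sigma onto those of pi with index in the section,
   while the clamping map back is a join-preserving retraction sending every
   other triple of pi to a single point; hence the translation reflects and
   preserves beta.  Its image exhausts the interval [[c_u], [c_v]] because, by
   the cut relations, anything there is equivalent to a point of the square. *)
From mathcomp Require Import all_boot all_fingroup zify.
Set Implicit Arguments. Unset Strict Implicit. Unset Printing Implicit Defensive.

Section BetaCongruence.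
Variables (m : nat) (p : 'S_m).

Lemma beta_join_congruence : join_congruence (beta p).
Proof.
split.
- by move=> x R [refl _ _ _] _.
- by move=> x y b R cR gR; case: (cR) => _ sym _ _; apply: sym; exact: b.
- move=> x y z bxy byz R cR gR; case: (cR) => _ _ trans _.
  exact: trans (bxy R cR gR) (byz R cR gR).
- by move=> x y z b R cR gR; case: (cR) => _ _ _ join; apply: join; exact: b.
Qed.

Lemma beta_refl x : beta p x x.
Proof. by case: beta_join_congruence => refl _ _ _; apply: refl. Qed.

Lemma beta_sym x y : beta p x y -> beta p y x.
Proof. by case: beta_join_congruence => _ sym _ _; apply: sym. Qed.

Lemma beta_trans x y z : beta p x y -> beta p y z -> beta p x z.
Proof. by case: beta_join_congruence => _ _ trans _; apply: trans. Qed.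

Lemma beta_join x y z : beta p x y -> beta p (gjoin x z) (gjoin y z).
Proof. by case: beta_join_congruence => _ _ _ join; apply: join. Qed.

Lemma beta_triple k x y : x \in triple p k -> y \in triple p k -> beta p x y.
Proof. by move=> xk yk R _ gR; apply: (gR k) => R' _; apply. Qed.

Lemma beta_least (R : gridT m -> gridT m -> Prop) :
  join_congruence R -> (forall k, collapses R (triple p k)) ->
  forall x y, beta p x y -> R x y.
Proof. by move=> cR tR x y; apply => // k x' y'; apply. Qed.

End BetaCongruence.

Lemma beta_transport m n (s : 'S_m) (p : 'S_n) (f : gridT m -> gridT n) :
  {morph f : x y / gjoin x y} ->
  (forall k x y, x \in triple s k -> y \in triple s k -> beta p (f x) (f y)) ->
  forall x y, beta s x y -> beta p (f x) (f y).
Proof.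
move=> fJ fT; apply: (beta_least (R := fun x y => beta p (f x) (f y))) => //.
split=> [x | x y | x y z | x y z]; [exact: beta_refl | exact: beta_sym |
  exact: beta_trans | by rewrite !fJ; apply: beta_join].
Qed.

Definition pt (m i j : nat) : gridT m := (inord i, inord j).

Lemma ptK m (x : gridT m) : pt m x.1 x.2 = x.
Proof. by case: x => a b; rewrite /pt !inord_val. Qed.

Lemma pt_bounds m (x : gridT m) : x.1 <= m /\ x.2 <= m.
Proof. by split; rewrite -ltnS; apply: ltn_ord. Qed.

Lemma pt_congr m i j i' j' : i = i' -> j = j' -> pt m i j = pt m i' j'.
Proof. by move=> -> ->. Qed.

Lemma gc_pt m t : gc m (inord t) = pt m t 0.
Proof. by rewrite /gc /pt; congr pair; apply: val_inj; rewrite /= inordK. Qed.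

Lemma gd_pt m t : gd m (inord t) = pt m 0 t.
Proof. by rewrite /gd /pt; congr pair; apply: val_inj; rewrite /= inordK. Qed.

Lemma tripleE m (p : 'S_m) (k : 'I_m) :
  triple p k = [:: pt m k (p k).+1; pt m k.+1 (p k); pt m k.+1 (p k).+1].
Proof. by []. Qed.

Lemma gjoinE m (x y : gridT m) :
  gjoin x y = pt m (maxn x.1 y.1) (maxn x.2 y.2).
Proof.
case: x y => [a b] [c d]; rewrite /gjoin /pt /=.
have := ltn_ord a; have := ltn_ord c; have := ltn_ord b; have := ltn_ord d.
by move=> *; congr pair; apply: val_inj; rewrite /= inordK; case: leqP => /=; lia.
Qed.

Lemma gjoin_pt m i j i' j' a b : i <= m -> j <= m -> i' <= m -> j' <= m ->
  maxn i i' = a -> maxn j j' = b -> gjoin (pt m i j) (pt m i' j') = pt m a b.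
Proof. by move=> *; rewrite gjoinE /= !inordK //; apply: pt_congr. Qed.

Lemma beta_join_pt m (p : 'S_m) i j i' j' k l a b c d :
  beta p (pt m i j) (pt m i' j') ->
  i <= m -> j <= m -> i' <= m -> j' <= m -> k <= m -> l <= m ->
  maxn i k = a -> maxn j l = b -> maxn i' k = c -> maxn j' l = d ->
  beta p (pt m a b) (pt m c d).
Proof.
move=> bij *; rewrite -(@gjoin_pt m i j k l a b) // -(@gjoin_pt m i' j' k l c d) //.
exact: beta_join.
Qed.

Definition cut n (p : 'S_n) (t : nat) : Prop := forall k : 'I_n, (p k < t) = (k < t).

Lemma closedJ_mem n (p : 'S_n) (J : {set 'I_n}) :
  closedJ p J -> forall k, (p k \in J) = (k \in J).
Proof.
move=> cJ k; have pJ : p @: J = J.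
  by apply/eqP; rewrite eqEcard card_imset ?leqnn ?andbT //; exact: perm_inj.
by rewrite -{1}pJ mem_imset //; exact: perm_inj.
Qed.

Lemma cut_closed_lo n (p : 'S_n) t : closedJ p (segm n 1 t) -> cut p t.
Proof. by move=> /closedJ_mem cJ k; have := cJ k; rewrite !inE. Qed.

Lemma cut_closed_hi n (p : 'S_n) t : closedJ p (segm n t.+1 n) -> cut p t.
Proof.
by move=> /closedJ_mem cJ k; have := cJ k; rewrite !inE !ltn_ord !andbT !ltnS !ltnNge => ->.
Qed.

Section Cut.
Variables (n t : nat) (p : 'S_n).
Hypotheses (ht : t <= n) (cut_t : cut p t).

Lemma beta_cut_absorb w : w <= t ->
  beta p (pt n t w) (pt n t 0) /\ beta p (pt n w t) (pt n 0 t).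
Proof.
elim: w => [|w IH] wt; first by split; apply: beta_refl.
have [IHc IHd] := IH (ltnW wt); have wn : w < n by lia.
split.
- set k := (p^-1 (Ordinal wn))%g.
  have pk : p k = w :> nat by rewrite /k permKV.
  have kt : k < t by rewrite -cut_t pk.
  have step : beta p (pt n k.+1 w) (pt n k.+1 w.+1).
    by apply: (beta_triple (k := k)); rewrite tripleE !inE pk eqxx ?orbT.
  have joined : beta p (pt n t w) (pt n t w.+1).
    by apply: (beta_join_pt (k := t) (l := 0) step); lia.
  exact: beta_trans (beta_sym joined) IHc.
- set k := Ordinal wn.
  have pkt : p k < t by rewrite cut_t.
  have step : beta p (pt n w (p k).+1) (pt n w.+1 (p k).+1).
    by apply: (beta_triple (k := k)); rewrite tripleE !inE eqxx ?orbT.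
  have joined : beta p (pt n w t) (pt n w.+1 t).
    by apply: (beta_join_pt (k := 0) (l := t) step); have := ltn_ord (p k); lia.
  exact: beta_trans (beta_sym joined) IHd.
Qed.

Lemma beta_cut_row i j : t <= i <= n -> j <= t -> beta p (pt n i j) (pt n i 0).
Proof.
by move=> ? jt; apply: (beta_join_pt (k := i) (l := 0) (beta_cut_absorb jt).1); lia.
Qed.

Lemma beta_cut_col i j : i <= t -> t <= j <= n -> beta p (pt n i j) (pt n 0 j).
Proof.
by move=> it ?; apply: (beta_join_pt (k := 0) (l := j) (beta_cut_absorb it).2); lia.
Qed.

Lemma narrows_cut : narrows p (gc n (inord t)).
Proof.
move=> x; rewrite gc_pt /cls_le -(ptK x).
have [] := pt_bounds x; set i := val x.1; set j := val x.2 => le_in le_jn.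
case: (leqP t i) => [ti | it].
  by right; rewrite (@gjoin_pt n t 0 i j i j) //; [apply: beta_refl | lia..].
case: (leqP j t) => [jt | tj].
  by left; rewrite (@gjoin_pt n i j t 0 t j) //; [apply: beta_cut_row; lia | lia..].
right; rewrite (@gjoin_pt n t 0 i j t j) //; try lia.
by apply: beta_trans (beta_cut_col _ _) (beta_sym (beta_cut_col _ _)); lia.
Qed.

End Cut.

Lemma perm_natE n (p : 'S_n) i (lt_in : i < n) : perm_nat p i = p (Ordinal lt_in).
Proof. by rewrite /perm_nat insubT. Qed.

Definition shift (n u : nat) {m : nat} (x : gridT m) : gridT n :=
  pt n (u + x.1) (u + x.2).

Definition clamp {n : nat} (u m : nat) (y : gridT n) : gridT m :=
  pt m (minn (y.1 - u) m) (minn (y.2 - u) m).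

Section Shift.
Variables (n m u : nat) (p : 'S_n) (s : 'S_m).
Hypotheses (le_umn : u + m <= n) (cut_u : cut p u) (cut_um : cut p (u + m)).
Hypothesis s_def : forall k : 'I_m, val (s k) = perm_nat p (u + k) - u.

Lemma lt_shift (k : 'I_m) : u + k < n.
Proof. by have := ltn_ord k; lia. Qed.

Lemma shift_perm (k : 'I_m) : p (Ordinal (lt_shift k)) = u + s k :> nat.
Proof.
have le_up : u <= p (Ordinal (lt_shift k)) by rewrite leqNgt cut_u /= -leqNgt leq_addr.
by rewrite s_def (perm_natE p (lt_shift k)) subnKC.
Qed.

Lemma shift_pt i j : i <= m -> j <= m -> shift n u (pt m i j) = pt n (u + i) (u + j).
Proof. by move=> *; rewrite /shift /= !inordK. Qed.

Lemma clamp_pt i j : i <= n -> j <= n ->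
  clamp u m (pt n i j) = pt m (minn (i - u) m) (minn (j - u) m).
Proof. by move=> *; rewrite /clamp /= !inordK. Qed.

Lemma shift_join : {morph @shift n u m : x y / gjoin x y}.
Proof.
move=> x y; have [? ?] := pt_bounds x; have [? ?] := pt_bounds y.
rewrite gjoinE shift_pt; try lia.
by rewrite /shift (@gjoin_pt n _ _ _ _ (u + maxn x.1 y.1) (u + maxn x.2 y.2)) //; lia.
Qed.

Lemma clamp_join : {morph @clamp n u m : x y / gjoin x y}.
Proof.
move=> x y; have [? ?] := pt_bounds x; have [? ?] := pt_bounds y.
rewrite gjoinE clamp_pt; try lia.
rewrite /clamp (@gjoin_pt m _ _ _ _ (minn (maxn x.1 y.1 - u) m) (minn (maxn x.2 y.2 - u) m))
  //; lia.
Qed.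

Lemma clamp_shift : cancel (shift n u) (clamp u m).
Proof.
move=> x; have [? ?] := pt_bounds x.
by rewrite /shift clamp_pt -1?[RHS]ptK; try apply: pt_congr; lia.
Qed.

Lemma shift_triple k :
  map (shift n u) (triple s k) = triple p (Ordinal (lt_shift k)).
Proof.
have := ltn_ord k; have := ltn_ord (s k); have := shift_perm k => psk *.
rewrite !tripleE /= psk !shift_pt; try lia.
by congr [:: _; _; _]; apply: pt_congr; lia.
Qed.

Lemma beta_shift_triple k x y :
  x \in triple s k -> y \in triple s k -> beta p (shift n u x) (shift n u y).
Proof.
move=> xk yk; apply: (beta_triple (k := Ordinal (lt_shift k)));
  by rewrite -shift_triple; apply: map_f.
Qed.

Lemma beta_clamp_triple k x y :
  x \in triple p k -> y \in triple p k -> beta s (clamp u m x) (clamp u m y).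
Proof.
have := ltn_ord k; have := ltn_ord (p k) => ltpk ltk.
have constant c : (forall z, z \in triple p k -> clamp u m z = c) ->
    x \in triple p k -> y \in triple p k -> beta s (clamp u m x) (clamp u m y).
  by move=> cT xk yk; rewrite (cT x xk) (cT y yk); apply: beta_refl.
case: (ltnP k u) => [lt_ku | le_uk].
  have lt_pku : p k < u by rewrite cut_u.
  apply: (constant (pt m 0 0)) => z; rewrite tripleE !inE => /or3P[]/eqP->;
    by rewrite clamp_pt; try apply: pt_congr; lia.
case: (ltnP k (u + m)) => [lt_kum | le_umk]; last first.
  have le_ump : u + m <= p k by rewrite leqNgt cut_um -leqNgt.
  apply: (constant (pt m m m)) => z; rewrite tripleE !inE => /or3P[]/eqP->;
    by rewrite clamp_pt; try apply: pt_congr; lia.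
have lt_k'm : k - u < m by lia.
have -> : k = Ordinal (lt_shift (Ordinal lt_k'm)) by apply: val_inj => /=; lia.
rewrite -shift_triple => /mapP[x' x'k ->] /mapP[y' y'k ->].
by rewrite !clamp_shift; apply: beta_triple x'k y'k.
Qed.

Lemma beta_shiftE x y : beta s x y <-> beta p (shift n u x) (shift n u y).
Proof.
split; first exact: (@beta_transport _ _ s p (@shift n u m) shift_join beta_shift_triple).
by move/(@beta_transport _ _ p s (clamp u m) clamp_join beta_clamp_triple); rewrite !clamp_shift.
Qed.

Lemma shift_between (x : gridT m) :
  cls_le p (pt n u 0) (shift n u x) /\ cls_le p (shift n u x) (pt n (u + m) 0).
Proof.
have [? ?] := pt_bounds x; rewrite /cls_le /shift; split.
  by rewrite (@gjoin_pt n u 0 _ _ (u + x.1) (u + x.2)); [apply: beta_refl | lia..].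
rewrite (@gjoin_pt n _ _ (u + m) 0 (u + m) (u + x.2)); [ | lia..].
by apply: (beta_cut_row le_umn cut_um); lia.
Qed.

Lemma shift_onto y : cls_le p (pt n u 0) y -> cls_le p y (pt n (u + m) 0) ->
  exists x : gridT m, beta p (shift n u x) y.
Proof.
have le_un : u <= n by lia.
rewrite /cls_le -(ptK y); have [] := pt_bounds y.
set i := val y.1; set j := val y.2 => le_in le_jn; set i' := maxn u i.
rewrite (@gjoin_pt n u 0 i j i' j) ?(@gjoin_pt n i j (u + m) 0 (maxn i (u + m)) j); try lia.
move=> above below.
have top : beta p (shift n u (pt m m m)) (pt n (u + m) 0).
  by rewrite shift_pt //; apply: (beta_cut_row le_umn cut_um); lia.
case: (leqP i (u + m)) => [le_iv | lt_vi]; last first.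
  exists (pt m m m); apply: beta_trans top (beta_sym _).
  by rewrite (maxn_idPl (ltnW lt_vi)) in below.
rewrite (maxn_idPr le_iv) in below.
case: (leqP j (u + m)) => [le_jv | lt_vj]; last first.
  exists (pt m m m); apply: beta_trans top (beta_trans (beta_sym below) _).
  apply: beta_trans (beta_cut_col le_umn cut_um _ _) _; try lia.
  by apply: beta_trans (beta_sym (beta_cut_col le_umn cut_um _ _)) above; lia.
exists (pt m (i' - u) (maxn u j - u)).
rewrite shift_pt ?subnKC ?leq_maxl; try lia.
apply: beta_trans above; case: (leqP j u) => [le_ju | _]; last exact: beta_refl.
by apply: beta_trans (beta_cut_row le_un cut_u _ _) (beta_sym (beta_cut_row le_un cut_u _ _)); lia.
Qed.

Lemma shift_interval_iso :
  interval_iso p s (gc n (inord u)) (gc n (inord (u + m))) (shift n u).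
Proof.
split=> [x y | x | y]; rewrite ?gc_pt.
- by rewrite /cls_le -shift_join; exact: beta_shiftE.
- exact: shift_between.
- exact: shift_onto.
Qed.

Lemma beta_shift_gc (k : 'I_m.+1) :
  beta p (shift n u (gc m k)) (gc n (inord (u + k))).
Proof.
have := ltn_ord k; rewrite gc_pt /shift /= addn0 => lt_km.
have le_un : u <= n by lia.
by apply: (beta_cut_row le_un cut_u); lia.
Qed.

Lemma shift_gd (k : 'I_m.+1) :
  shift n u (gd m k) = gjoin (gc n (inord u)) (gd n (inord (u + k))).
Proof.
have := ltn_ord k; rewrite gc_pt gd_pt /shift /= addn0 => lt_km.
by rewrite (@gjoin_pt n u 0 0 (u + k) u (u + k)) //; lia.
Qed.
End Shift.

Theorem lemma4p5 (n : nat) (p : 'S_n) (u v : nat) (huv : u < v) (hvn : v <= n)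
  (hsec : is_section p u.+1 v) (s : 'S_(v - u))
  (hs : forall k : 'I_(v - u), val (s k) = perm_nat p (u + k) - u) :
  narrows p (gc n (inord u)) /\ narrows p (gc n (inord v)) /\
  exists f : gridT (v - u) -> gridT n,
    [/\ interval_iso p s (gc n (inord u)) (gc n (inord v)) f,
        (forall k : 'I_(v - u).+1, beta p (f (gc (v - u) k)) (gc n (inord (u + k))))
      & (forall k : 'I_(v - u).+1,
           beta p (f (gd (v - u) k)) (gjoin (gc n (inord u)) (gd n (inord (u + k)))))].
Proof.
case: hsec => _ _ _ /cut_closed_lo cut_u /cut_closed_hi cut_v.
have le_uv := ltnW huv; have v_def : u + (v - u) = v := subnKC le_uv.
have le_un := leq_trans le_uv hvn.
have le_umn : u + (v - u) <= n by rewrite v_def.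
have cut_um : cut p (u + (v - u)) by rewrite v_def.
split; first exact: narrows_cut le_un cut_u.
split; first exact: narrows_cut hvn cut_v.
exists (shift n u); split.
- by have := shift_interval_iso le_umn cut_u cut_um hs; rewrite v_def.
- by move=> k; exact: beta_shift_gc le_umn cut_u k.
- by move=> k; rewrite (shift_gd le_umn); apply: beta_refl.
Qed.
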